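(* Let $G$ be a finite-dimensional $\mathbb{F}_p$-vector space, $V\le G$ a subspace, and $\beta:G\times G\to\mathbb{F}_p^r$ a bilinear map such that $\beta|_{V\times V}$ has rank at least $s$. Fix a coset $a+V$ and let $B=\{(x,y)\in(a+V)\times V:\beta(x,y)=0\}$. Let $S\le V$ be a subspace of codimension $d$ and let $k$ be a positive integer. Then \[(S\cap B_{x_1\cdot}\cap\dots\cap B_{x_k\cdot})+(S\cap B_{y_1\cdot}\cap\dots\cap B_{y_k\cdot})=S\] holds for all but at most $81p^{2d+4kr-s/4}|V|^{2k}$ choices of $(x_1,\dots,x_k,y_1,\dots,y_k)\in(a+V)^{2k}$.
   Context: For $x\in a+V$, $B_{x\cdot}=\{y\in V:(x,y)\in B\}$. A bilinear map $\gamma:V\times V\to\mathbb{F}_p^r$ has rank at least $s$ if for every nonzero $\lambda\in\mathbb{F}_p^r$ the bilinear form $\lambda\cdot\gamma$ has rank at least $s$ on $V\times V$. *)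

From HB Require Import structures.
From mathcomp Require Import all_boot all_order all_algebra all_field.
From mathcomp Require Import all_classical all_reals all_analysis.
Set Implicit Arguments. Unset Strict Implicit. Unset Printing Implicit Defensive.
Import Order.TTheory GRing.Theory Num.Theory.
Local Open Scope ring_scope.

(* The ambient space G is modelled as 'rV['F_p]_n (every finite-dimensional
   F_p-space is isomorphic to one of these); F_p^r is 'rV['F_p]_r. *)

Definition bilinear_map (p n r : nat)
  (beta : 'rV['F_p]_n -> 'rV['F_p]_n -> 'rV['F_p]_r) : Prop :=
  (forall (a : 'F_p) x1 x2 y, beta (a *: x1 + x2) y = a *: beta x1 y + beta x2 y) /\
  (forall (a : 'F_p) x y1 y2, beta x (a *: y1 + y2) = a *: beta x y1 + beta x y2).

Definition form_rank_on (p n : nat) (V : {vspace 'rV['F_p]_n})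
  (w : 'rV['F_p]_n -> 'rV['F_p]_n -> 'F_p) : nat :=
  \rank (\matrix_(i < \dim V, j < \dim V) w (tnth (vbasis V) i) (tnth (vbasis V) j)).

Definition dot_form (p n r : nat) (lam : 'rV['F_p]_r)
  (beta : 'rV['F_p]_n -> 'rV['F_p]_n -> 'rV['F_p]_r) :=
  fun x y => \sum_(i < r) lam 0 i * beta x y 0 i.

Definition rank_at_least_on (p n r : nat) (V : {vspace 'rV['F_p]_n})
  (beta : 'rV['F_p]_n -> 'rV['F_p]_n -> 'rV['F_p]_r) (s : nat) : Prop :=
  forall lam : 'rV['F_p]_r, lam != 0 -> (s <= form_rank_on V (dot_form lam beta))%N.

Definition vset (p n : nat) (U : {vspace 'rV['F_p]_n}) : {set 'rV['F_p]_n} :=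
  [set v | v \in U].

Definition in_coset (p n : nat) (a : 'rV['F_p]_n) (V : {vspace 'rV['F_p]_n}) x :=
  (x - a) \in V.

Definition Bsec (p n r : nat) (V : {vspace 'rV['F_p]_n})
  (beta : 'rV['F_p]_n -> 'rV['F_p]_n -> 'rV['F_p]_r) (x : 'rV['F_p]_n) :
  {set 'rV['F_p]_n} := [set y | (y \in V) && (beta x y == 0)].

Definition Sint (p n r k : nat) (V S : {vspace 'rV['F_p]_n})
  (beta : 'rV['F_p]_n -> 'rV['F_p]_n -> 'rV['F_p]_r) (x : {ffun 'I_k -> 'rV['F_p]_n}) :
  {set 'rV['F_p]_n} := vset S :&: \bigcap_(i < k) Bsec V beta (x i).

Definition minksum (p n : nat) (A C : {set 'rV['F_p]_n}) : {set 'rV['F_p]_n} :=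
  [set u + w | u in A, w in C].

From HB Require Import structures.
From mathcomp Require Import all_boot all_order all_algebra all_field.
From mathcomp Require Import all_classical all_reals all_analysis.
From mathcomp Require Import zify.
Import Order.TTheory GRing.Theory Num.Theory.
Local Open Scope ring_scope.
Set Implicit Arguments. Unset Strict Implicit. Unset Printing Implicit Defensive.

(* Write beta through the Gram matrices of its r components; then
   S :&: B_{x_1.} :&: ... :&: B_{x_k.} is the annihilator in S of the span of
   the vectors x_i B_l. If the two such subspaces for x and y do not sum to S,
   taking annihilators yields lambda <> 0 and mu in F_p^(k x r) with
   sum_i lambda_i.beta(x_i, z) = sum_i mu_i.beta(y_i, z) for every z in S.
   For fixed (lambda, mu) pick j with lambda_j <> 0: once the other 2k - 1
   coordinates are fixed, any two admissible x_j differ by an element of the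
   left kernel of lambda_j.beta on V x S, which has at most p^(dim V + d - s)
   elements because lambda_j.beta has rank at least s on V. Summing over the
   p^(2kr) pairs (lambda, mu) bounds the exceptional tuples by
   p^(2kr + d - s) |V|^(2k), which is below the stated bound. *)

Section Annihilator.
Variables (F : fieldType) (n : nat).

Definition annmx m (A : 'M[F]_(m, n)) : 'M[F]_n := kermx A^T.
Arguments annmx {m} A%_MS.

Lemma sub_annmx m1 m2 (A : 'M[F]_(m1, n)) (B : 'M[F]_(m2, n)) :
  (B <= annmx A)%MS = (B *m A^T == 0).
Proof. exact: sub_kermx. Qed.

Lemma sub_annmxC m1 m2 (A : 'M[F]_(m1, n)) (B : 'M[F]_(m2, n)) :
  (B <= annmx A)%MS = (A <= annmx B)%MS.
Proof. by rewrite !sub_annmx -trmx_eq0 trmx_mul trmxK. Qed.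

Lemma annmxS m1 m2 (A : 'M[F]_(m1, n)) (B : 'M[F]_(m2, n)) :
  (A <= B)%MS -> (annmx B <= annmx A)%MS.
Proof. by move=> sAB; rewrite sub_annmxC (submx_trans sAB) // -sub_annmxC. Qed.

Lemma eqmx_annmx m1 m2 (A : 'M[F]_(m1, n)) (B : 'M[F]_(m2, n)) :
  (A :=: B)%MS -> (annmx A :=: annmx B)%MS.
Proof. by move=> eqAB; apply/eqmxP; rewrite !annmxS ?eqAB. Qed.

Lemma mxrank_annmx m (A : 'M[F]_(m, n)) : \rank (annmx A) = (n - \rank A)%N.
Proof. by rewrite mxrank_ker mxrank_tr. Qed.

Lemma annmxK m (A : 'M[F]_(m, n)) : (annmx (annmx A) :=: A)%MS.
Proof.
have sA : (A <= annmx (annmx A))%MS by rewrite -sub_annmxC.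
apply/eqmx_sym/eqmxP; rewrite -(eq_leqif (mxrank_leqif_eq sA)) !mxrank_annmx.
by rewrite subKn ?rank_leq_col.
Qed.

Lemma annmx_adds m1 m2 (A : 'M[F]_(m1, n)) (B : 'M[F]_(m2, n)) :
  (annmx (A + B) :=: annmx A :&: annmx B)%MS.
Proof.
apply/eqmxP/andP; split; first by rewrite sub_capmx !annmxS ?addsmxSl ?addsmxSr.
by rewrite sub_annmxC addsmx_sub; apply/andP; split; rewrite -sub_annmxC ?capmxSl ?capmxSr.
Qed.

Lemma annmx_cap m1 m2 (A : 'M[F]_(m1, n)) (B : 'M[F]_(m2, n)) :
  (annmx (A :&: B) :=: annmx A + annmx B)%MS.
Proof.
apply: eqmx_trans _ (annmxK (annmx A + annmx B)%MS).
apply: eqmx_annmx; apply: eqmx_sym; apply: eqmx_trans (annmx_adds _ _) _.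
exact: cap_eqmx (annmxK A) (annmxK B).
Qed.

Lemma capmx_annmx m1 m2 (A : 'M[F]_(m1, n)) (B : 'M[F]_(m2, n)) :
  (A :&: annmx B :=: annmx (annmx A + B))%MS.
Proof.
apply: eqmx_sym; apply: eqmx_trans (annmx_adds _ _) _.
exact: cap_eqmx (annmxK A) (eqmx_refl _).
Qed.

(* Taking annihilators, the hypothesis says that (S^perp + W1) :&: (S^perp + W2)
   is not contained in S^perp; decompose a witness in both sums. *)
Lemma not_sub_adds_cap_annmx m m1 m2 (S : 'M[F]_(m, n))
    (W1 : 'M[F]_(m1, n)) (W2 : 'M[F]_(m2, n)) :
  ~~ (S <= (S :&: annmx W1) + (S :&: annmx W2))%MS ->
  exists g1 g2 : 'rV[F]_n,
    [/\ (g1 <= W1)%MS, (g2 <= W2)%MS, g1 != 0 & (g1 - g2 <= annmx S)%MS].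
Proof.
set T1 := (annmx S + W1)%MS; set T2 := (annmx S + W2)%MS.
have sum_capE : ((S :&: annmx W1) + (S :&: annmx W2) :=: annmx (T1 :&: T2))%MS.
  apply: eqmx_trans (adds_eqmx (capmx_annmx _ _) (capmx_annmx _ _)) _.
  exact: eqmx_sym (annmx_cap _ _).
rewrite sum_capE => notS.
have /row_subPn[i notSi] : ~~ (T1 :&: T2 <= annmx S)%MS.
  by apply: contra notS => /annmxS; rewrite (annmxK S).
have /sub_addsmxP[[u1 v1] /= wE1] := submx_trans (row_sub i _) (capmxSl T1 T2).
have /sub_addsmxP[[u2 v2] /= wE2] := submx_trans (row_sub i _) (capmxSr T1 T2).
exists (v1 *m W1), (v2 *m W2); split; rewrite ?submxMl //.
  by apply: contra notSi => /eqP v0; rewrite wE1 v0 addr0 submxMl.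
have -> : v1 *m W1 - v2 *m W2 = u2 *m annmx S - u1 *m annmx S.
  have eW1 : v1 *m W1 = row i (T1 :&: T2)%MS - u1 *m annmx S by rewrite wE1 addrC addKr.
  have eW2 : v2 *m W2 = row i (T1 :&: T2)%MS - u2 *m annmx S by rewrite wE2 addrC addKr.
  by rewrite eW1 eW2 opprB addrC addrA subrK.
by rewrite addmx_sub ?eqmx_opp ?submxMl.
Qed.

End Annihilator.
Arguments annmx {F n m} A%_MS.

Section Lines.
Variables (F : fieldType) (n : nat) (I : finType) (g : I -> 'rV[F]_n).

Lemma sub_sum_linesP w :
  reflect (exists c : I -> F, w = \sum_i c i *: g i) (w <= \sum_i <<g i>>)%MS.
Proof.
apply: (iffP idP) => [/sub_sumsmxP[u ->]|[c ->]].
  have /fin_all_exists[c cE] : forall i, exists a, u i *m <<g i>>%MS = a *: g i.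
    by move=> i; apply/sub_rVP; rewrite -(genmxE (g i)) submxMl.
  by exists c; apply: eq_bigr => i _; rewrite cE.
by apply: summx_sub => i _; rewrite (sumsmx_sup i) ?scalemx_sub ?genmxE.
Qed.

Lemma sub_annmx_sum_lines (z : 'rV[F]_n) :
  (z <= annmx (\sum_i <<g i>>))%MS = [forall i, g i *m z^T == 0].
Proof.
rewrite sub_annmxC; apply/sumsmx_subP/forallP => [sub_g i | orth_g i _].
  by rewrite -sub_annmx -(genmxE (g i)) sub_g.
by rewrite genmxE sub_annmx orth_g.
Qed.
End Lines.

Section BasisMatrix.
Variables (F : fieldType) (n : nat).
Implicit Type U : {vspace 'rV[F]_n}.

Definition basismx U : 'M[F]_(\dim U, n) := \matrix_i tnth (vbasis U) i.

Lemma mul_basismx U (c : 'rV[F]_(\dim U)) :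
  c *m basismx U = \sum_i c 0 i *: (vbasis U)`_i.
Proof.
by rewrite mulmx_sum_row; apply: eq_bigr => i _; rewrite rowK (tnth_nth 0).
Qed.

Lemma basismx_free U : row_free (basismx U).
Proof.
apply: inj_row_free => c; rewrite mul_basismx => /eqP c0; apply/rowP => i.
by rewrite mxE; move/freeP: (basis_free (vbasisP U)); apply; apply/eqP.
Qed.

Lemma mxrank_basismx U : \rank (basismx U) = \dim U.
Proof. exact/eqP/basismx_free. Qed.

Lemma memv_basismx U v : (v \in U) = (v <= basismx U)%MS.
Proof.
apply/idP/submxP => [/coord_vbasis vE | [c ->]].
  exists (\row_i coord (vbasis U) i v).
  by rewrite mul_basismx {1}vE; apply: eq_bigr => i _; rewrite mxE.
by rewrite mul_basismx memv_suml // => i _; rewrite memvZ ?vbasis_mem ?memt_nth.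
Qed.

Lemma basismxS (U W : {vspace 'rV[F]_n}) :
  (U <= W)%VS -> (basismx U <= basismx W)%MS.
Proof.
move=> sUW; apply/row_subP => i; rewrite rowK -memv_basismx.
exact/(subvP sUW)/vbasis_mem/mem_tnth.
Qed.

End BasisMatrix.

Lemma mxrank_form_sub (F : fieldType) m1 m2 n (A : 'M[F]_(m1, n)) (B : 'M[F]_(m2, n))
    (M : 'M[F]_n) :
  (B <= A)%MS -> (\rank (A *m M *m A^T) + \rank B <= \rank (A *m M *m B^T) + m1)%N.
Proof.
case/submxP=> Q ->; rewrite trmx_mul mulmxA.
apply: leq_trans (leq_add (leqnn _) (mxrankM_maxl Q A)) _.
by rewrite [X in (_ <= X)%N]addnC -leq_subLR -(mxrank_tr Q) mxrank_mul_min.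
Qed.

Lemma linear_rowE (F : fieldType) n (W : lmodType F) (f : 'rV[F]_n -> W) :
  linear f -> forall x, f x = \sum_i x 0 i *: f (delta_mx 0 i).
Proof.
move=> lin_f x.
pose g : {linear 'rV[F]_n -> W} := HB.pack f (GRing.isLinear.Build _ _ _ _ f lin_f).
rewrite -[f x]/(g x) {1}(row_sum_delta x) linear_sum.
by apply: eq_bigr => i _; rewrite linearZ.
Qed.

Section FiniteField.
Variable F : finFieldType.

Lemma card_rowspace m n (A : 'M[F]_(m, n)) :
  #|[set v : 'rV[F]_n | (v <= A)%MS]| = (#|F| ^ \rank A)%N.
Proof.
have -> : [set v : 'rV[F]_n | (v <= A)%MS] = [set c *m row_base A | c in 'rV_(\rank A)].
  apply/setP => v; rewrite inE -(eq_row_base A).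
  by apply/submxP/imsetP => [[c ->]|[c _ ->]]; exists c.
by rewrite card_imset ?card_mx ?mul1n //; exact: row_free_inj (row_base_free A).
Qed.

Lemma card_vspace_ker n (U : {vspace 'rV[F]_n}) m (M : 'M[F]_(n, m)) :
  #|[set w | (w \in U) && (w *m M == 0)]| = (#|F| ^ (\dim U - \rank (basismx U *m M)))%N.
Proof.
have -> : [set w | (w \in U) && (w *m M == 0)] =
          [set c *m basismx U | c in [set c | (c <= kermx (basismx U *m M))%MS]].
  apply/setP => w; rewrite inE memv_basismx; apply/andP/imsetP => [[/submxP[c ->] cM0]|[c]].
    by exists c; rewrite // inE sub_kermx mulmxA.
  by rewrite inE sub_kermx mulmxA => cM0 ->; split; rewrite ?submxMl.
rewrite card_imset ?card_rowspace ?mxrank_ker //; exact: row_free_inj (basismx_free U).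
Qed.

End FiniteField.

Lemma card_bigcup_le (I T : finType) (P : pred I) (A : I -> {set T}) :
  (#|\bigcup_(i | P i) A i| <= \sum_(i | P i) #|A i|)%N.
Proof.
elim/big_rec2: _ => [|i m U _ IH]; first by rewrite cards0.
by apply: leq_trans (leq_card_setU _ _) _; rewrite leq_add2l.
Qed.

Lemma card_le_fiber_diff (T U : finType) (W : finZmodType) (A : {set T}) (K : {set W})
    (pi : T -> U) (h : T -> W) :
  {in A &, forall t t', pi t = pi t' -> h t = h t' -> t = t'} ->
  {in A &, forall t t', pi t = pi t' -> h t - h t' \in K} ->
  (#|A| <= #|pi @: A| * #|K|)%N.
Proof.
move=> inj_pi_h diffK.
rewrite -sum1_card (partition_big_imset pi) /= -sum_nat_const leq_sum //.
move=> _ /imsetP[t0 At0 ->].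
rewrite sum1dep_card -(card_in_imset (f := fun t => h t - h t0)).
  apply/subset_leq_card/fintype.subsetP => _ /imsetP[t /finset.setIdP[At /eqP pit] ->].
  exact: diffK.
move=> t t' /finset.setIdP[At /eqP pit] /finset.setIdP[At' /eqP pit'] /addIr.
by apply: inj_pi_h; rewrite // pit pit'.
Qed.

Section PrimeField.
Variables (p n : nat).
Hypothesis p_pr : prime p.
Local Notation E := 'rV['F_p]_n.

Lemma card_vset (U : {vspace E}) : #|vset U| = (p ^ \dim U)%N.
Proof.
rewrite -[X in (X ^ _)%N](card_Fp p_pr) -card_vspace.
by apply: eq_card => v; rewrite inE.
Qed.

Lemma card_vcoset a (U : {vspace E}) : #|[set x | in_coset a U x]| = #|vset U|.
Proof.
rewrite -(card_imset (vset U) (addIr a)); apply: eq_card => x; rewrite !inE /in_coset.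
apply/idP/imsetP => [xaU | [y]]; first by exists (x - a); rewrite ?inE ?subrK.
by rewrite inE => yU ->; rewrite addrK.
Qed.

End PrimeField.

Section BilinearMap.
Variables (p n r : nat).
Local Notation E := 'rV['F_p]_n.
Variable beta : E -> E -> 'rV['F_p]_r.
Hypothesis hbeta : bilinear_map beta.

Definition bilmx (l : 'I_r) : 'M['F_p]_n :=
  \matrix_(i, j) beta (delta_mx 0 i) (delta_mx 0 j) 0 l.

Lemma bilinear_mxE x y l : beta x y 0 l = (x *m bilmx l *m y^T) 0 0.
Proof.
have linl y' : linear (beta^~ y') by move=> c x1 x2; exact: hbeta.1.
have linr x' : linear (beta x') by move=> c y1 y2; exact: hbeta.2.
rewrite (linear_rowE (linl y)) -mulmxA summxE mxE; apply: eq_bigr => i _.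
rewrite (linear_rowE (linr _)) !mxE summxE; congr (_ * _).
by apply: eq_bigr => j _; rewrite !mxE mulrC.
Qed.

Lemma beta_eq0 x y : (beta x y == 0) = [forall l, x *m bilmx l *m y^T == 0].
Proof.
apply/eqP/forallP => [xy0 l | xy0]; last first.
  by apply/rowP => l; rewrite bilinear_mxE [x *m _ *m _]mx11_scalar (eqP (xy0 l)) !mxE.
by apply/eqP/matrixP => i j; rewrite !ord1 -bilinear_mxE xy0 !mxE.
Qed.

Definition formmx (lam : 'rV['F_p]_r) : 'M['F_p]_n := \sum_l lam 0 l *: bilmx l.

Lemma dot_formE lam x y : dot_form lam beta x y = (x *m formmx lam *m y^T) 0 0.
Proof.
rewrite /dot_form mulmx_sumr mulmx_suml summxE; apply: eq_bigr => l _.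
by rewrite -scalemxAr -scalemxAl mxE bilinear_mxE.
Qed.

Lemma form_rank_onE (V : {vspace E}) lam :
  form_rank_on V (dot_form lam beta) = \rank (basismx V *m formmx lam *m (basismx V)^T).
Proof.
congr (\rank _); apply/matrixP => i j; rewrite !mxE dot_formE !mxE.
apply: eq_bigr => t _; rewrite !mxE; congr (_ * _).
by apply: eq_bigr => u _; rewrite !mxE.
Qed.

Variable k : nat.
Implicit Types X Y : {ffun 'I_k -> E}.

Definition spanmx X : 'M['F_p]_n :=
  (\sum_(il : 'I_k * 'I_r) <<X il.1 *m bilmx il.2>>)%MS.

(* [(comb X lam *m z^T) 0 0] is [\sum_i dot_form (row i lam) beta (X i) z]. *)
Definition comb X (lam : 'M['F_p]_(k, r)) : E := \sum_i X i *m formmx (row i lam).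

Lemma comb0 X : comb X 0 = 0.
Proof.
rewrite /comb big1 // => i _; rewrite /formmx big1 ?mulmx0 // => l _.
by rewrite !mxE scale0r.
Qed.

Lemma sub_spanmx_comb X g : (g <= spanmx X)%MS -> exists lam, g = comb X lam.
Proof.
case/sub_sum_linesP=> c ->; exists (\matrix_(i, l) c (i, l)).
under [RHS]eq_bigr do rewrite /formmx mulmx_sumr.
rewrite pair_big /=; apply: eq_bigr => -[i l] _.
by rewrite !mxE -scalemxAr.
Qed.

Lemma Sint_rowspace (V S : {vspace E}) X : (S <= V)%VS ->
  Sint V S beta X = [set z | (z <= basismx S :&: annmx (spanmx X))%MS].
Proof.
move=> sSV; apply/setP => z; rewrite !inE sub_capmx -memv_basismx sub_annmx_sum_lines.
case zS: (z \in S) => //=; have zV : z \in V := subvP sSV z zS.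
apply/bigcapP/forallP => [zB [i l] | zB i _]; rewrite ?inE ?zV /=.
  by have := zB i isT; rewrite inE zV beta_eq0 => /forallP.
by rewrite beta_eq0; apply/forallP => l; apply: (zB (i, l)).
Qed.

Lemma combB_lift X Y lam j : (forall i, X (lift j i) = Y (lift j i)) ->
  comb X lam - comb Y lam = (X j - Y j) *m formmx (row j lam).
Proof.
move=> XY; rewrite /comb (bigD1 j) //= [in X in _ - X](bigD1 j) //=.
rewrite (eq_bigr (fun i => Y i *m formmx (row i lam))) => [|i]; last first.
  by case: (unliftP j i) => [i' ->|->]; rewrite ?XY ?eqxx.
by rewrite opprD addrACA subrr addr0 mulmxBl.
Qed.

Lemma rowspace_minksum (A B : 'M['F_p]_n) :
  minksum [set z | (z <= A)%MS] [set z | (z <= B)%MS] = [set z | (z <= A + B)%MS].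
Proof.
apply/setP => z; rewrite inE; apply/imset2P/sub_addsmxP => [[u w]|[[u w] /= ->]].
  by rewrite !inE => /submxP[cu ->] /submxP[cw ->] ->; exists (cu, cw).
by exists (u *m A) (w *m B); rewrite ?inE ?submxMl.
Qed.

Lemma vset_rowspace (U : {vspace E}) : vset U = [set z | (z <= basismx U)%MS].
Proof. by apply/setP => z; rewrite !inE memv_basismx. Qed.

Lemma minksum_Sint_neq_comb (V S : {vspace E}) X Y : (S <= V)%VS ->
    minksum (Sint V S beta X) (Sint V S beta Y) != vset S ->
  exists lam mu, lam != 0 /\ (comb X lam - comb Y mu <= annmx (basismx S))%MS.
Proof.
move=> sSV; rewrite !Sint_rowspace // rowspace_minksum vset_rowspace => neqS.
have [|g1 [g2 [/sub_spanmx_comb[lam ->] /sub_spanmx_comb[mu ->] nz rel]]] :=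
  @not_sub_adds_cap_annmx _ _ _ _ _ (basismx S) (spanmx X) (spanmx Y).
  apply: contra neqS => sS; apply/eqP/setP => z; rewrite !inE.
  apply/idP/idP => [zsum | zS]; last exact: submx_trans zS sS.
  by apply: submx_trans zsum _; rewrite addsmx_sub !capmxSl.
by exists lam, mu; split=> //; apply: contraNneq nz => ->; rewrite comb0.
Qed.

End BilinearMap.

Section Counting.
Variables (p n r k : nat).
Local Notation E := 'rV['F_p]_n.
Variable beta : E -> E -> 'rV['F_p]_r.
Variables (V S : {vspace E}) (s d : nat) (a : E).
Hypotheses (p_pr : prime p) (hbeta : bilinear_map beta) (hSV : (S <= V)%VS)
  (hrank : rank_at_least_on V beta s) (hcodim : (\dim S + d)%N = \dim V).

Local Notation coset := [set x | in_coset a V x].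
Local Notation tuple_pair := ({ffun 'I_k -> E} * {ffun 'I_k -> E})%type.

Definition rel_tuples (lam mu : 'M['F_p]_(k, r)) : {set tuple_pair} :=
  [set t | [&& t.1 \in ffun_on coset, t.2 \in ffun_on coset &
              (comb beta t.1 lam - comb beta t.2 mu <= annmx (basismx S))%MS]].

Definition left_kernel (lam : 'rV['F_p]_r) : {set E} :=
  [set w | (w \in V) && (w *m (formmx beta lam *m (basismx S)^T) == 0)].

Lemma card_left_kernel_le lam : lam != 0 ->
  (#|left_kernel lam| * p ^ s <= p ^ (\dim V + d))%N.
Proof.
move=> lam0; rewrite card_vspace_ker card_Fp // -expnD leq_exp2l ?prime_gt1 //.
have := hrank lam0; rewrite form_rank_onE // -mulmxA.
have := mxrank_form_sub (formmx beta lam) (basismxS hSV); rewrite -!mulmxA !mxrank_basismx.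
have := rank_leq_row (basismx V *m (formmx beta lam *m (basismx S)^T)).
(* [set] merges copies of the same term that differ only in their instance
   paths, which [lia] would otherwise treat as distinct atoms. *)
move: hcodim; set dV := \dim V; set dS := \dim S.
set R := \rank (basismx V *m _); set G := \rank (basismx V *m _); lia.
Qed.

Lemma card_rel_tuples_le lam mu : lam != 0 ->
  (#|rel_tuples lam mu| * p ^ s <= #|vset V| ^ (2 * k) * p ^ d)%N.
Proof.
move=> lam0.
have [j nz_j] : exists j, row j lam != 0.
  apply/existsP; apply: contraNT lam0 => /existsPn zero_rows.
  by apply/eqP/row_matrixP => j; rewrite row0; apply/eqP/negbNE/zero_rows.
pose pi (t : tuple_pair) := ([ffun i => t.1 (lift j i)], t.2).
have fibers :
    (#|rel_tuples lam mu| <= #|pi @: rel_tuples lam mu| * #|left_kernel (row j lam)|)%N.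
  apply: (card_le_fiber_diff (h := fun t : tuple_pair => t.1 j)) => -[x y] [x' y'];
    rewrite !inE /= => /and3P[/ffun_onP xC _ rel] /and3P[/ffun_onP x'C _ rel'];
    case=> /ffunP xx' yy'; subst y'.
    move=> xj; congr (_, _); apply/ffunP => i.
    by case: (unliftP j i) => [i' ->|->] //; have := xx' i'; rewrite !ffunE.
  have {}xx' i : x (lift j i) = x' (lift j i) by have := xx' i; rewrite !ffunE.
  move: (xC j) (x'C j); rewrite !inE /in_coset => xjV x'jV.
  have subB (u v w : E) : u - v = (u - w) - (v - w) by rewrite opprB subrKA.
  rewrite {1}(subB _ _ a) memvB //= mulmxA -sub_annmx -combB_lift //.
  by rewrite (subB _ _ (comb beta y mu)) addmx_sub ?eqmx_opp.
have image : (#|pi @: rel_tuples lam mu| <= #|vset V| ^ k.-1 * #|vset V| ^ k)%N.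
  rewrite -!(card_vcoset a).
  apply: leq_trans (subset_leq_card (_ : _ \subset
    finset.setX [set f | f \in ffun_on coset] [set f | f \in ffun_on coset])) _.
    apply/fintype.subsetP => _ /imsetP[[x y] + ->].
    rewrite !inE /= => /and3P[/ffun_onP xC -> _].
    by rewrite andbT; apply/ffun_onP => i; rewrite ffunE.
  by rewrite cardsX !(cardsE (ffun_on _)) !card_ffun_on !card_ord.
have k_eq : (2 * k = k.-1 + k + 1)%N by have := ltn_ord j; lia.
apply: leq_trans (leq_mul fibers (leqnn (p ^ s))) _; rewrite -mulnA.
apply: leq_trans (leq_mul image (card_left_kernel_le nz_j)) _.
by rewrite expnD -card_vset // k_eq !expnD expn1 !mulnA.
Qed.

Lemma card_minksum_Sint_neq_le :
  (#|[set t : tuple_pair | [forall i, in_coset a V (t.1 i) && in_coset a V (t.2 i)] &&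
        (minksum (Sint V S beta t.1) (Sint V S beta t.2) != vset S)]| * p ^ s
     <= p ^ (2 * (k * r)) * #|vset V| ^ (2 * k) * p ^ d)%N.
Proof.
set Bad := [set t | _].
have Bad_sub : Bad \subset
    \bigcup_(lm : 'M['F_p]_(k, r) * 'M['F_p]_(k, r) | lm.1 != 0) rel_tuples lm.1 lm.2.
  apply/fintype.subsetP => t; rewrite inE => /andP[/forallP inC neqS].
  have [lam [mu [lam0 rel]]] := minksum_Sint_neq_comb hbeta hSV neqS.
  apply/bigcupP; exists (lam, mu) => //; rewrite inE rel andbT.
  by apply/andP; split; apply/ffun_onP => i; rewrite inE; case/andP: (inC i).
apply: leq_trans (leq_mul (subset_leq_card Bad_sub) (leqnn _)) _.
apply: leq_trans (leq_mul (card_bigcup_le _ _) (leqnn _)) _; rewrite big_distrl /=.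
apply: (@leq_trans
  (\sum_(lm : 'M['F_p]_(k, r) * 'M['F_p]_(k, r)) #|vset V| ^ (2 * k) * p ^ d)).
  rewrite big_mkcond; apply: leq_sum => lm _; case: ifP => // lm0.
  exact: card_rel_tuples_le.
by rewrite sum_nat_const card_prod !card_mx card_Fp // -expnD addnn -mul2n mulnA.
Qed.

End Counting.

Lemma ler_nat_powR (R : realType) (N v p e s : nat) (x : R) : (0 < p)%N ->
  (N * p ^ s <= p ^ e * v)%N -> e%:R - s%:R <= x -> N%:R <= p%:R `^ x * v%:R.
Proof.
move=> p_gt0 hN hx; have p_ge1 : 1 <= p%:R :> R by rewrite ler1n.
have p_neq0 : p%:R != 0 :> R by rewrite pnatr_eq0 -lt0n.
apply: le_trans (ler_wpM2r (ler0n _ _) (ler_powR p_ge1 hx)).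
rewrite powRB ?p_neq0 ?implybT // !powR_mulrn ?ler0n //.
by rewrite mulrAC ler_pdivlMr ?exprn_gt0 ?ltr0n // -!natrX -!natrM ler_nat.
Qed.

Theorem lemma2p8 (R : realType) (p n r s : nat) (p_pr : prime p)
  (V : {vspace 'rV['F_p]_n})
  (beta : 'rV['F_p]_n -> 'rV['F_p]_n -> 'rV['F_p]_r)
  (hbeta : bilinear_map beta) (hrank : rank_at_least_on V beta s)
  (a : 'rV['F_p]_n) (S : {vspace 'rV['F_p]_n}) (d k : nat)
  (hSV : (S <= V)%VS) (hcodim : (\dim S + d)%N = \dim V) (hk : (0 < k)%N) :
  (#|[set t : {ffun 'I_k -> 'rV['F_p]_n} * {ffun 'I_k -> 'rV['F_p]_n} |
      [forall i, in_coset a V (t.1 i) && in_coset a V (t.2 i)] &&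
      (minksum (Sint V S beta t.1) (Sint V S beta t.2) != vset S)]|%:R : R)
  <= 81 * (p%:R : R) `^ ((2 * d + 4 * k * r)%:R - s%:R / 4)
        * (#|vset V|%:R : R) ^+ (2 * k).
Proof.
have count := card_minksum_Sint_neq_le k a p_pr hbeta hSV hrank hcodim.
rewrite -natrX; apply: le_trans (ler_nat_powR (s := s) (e := (2 * (k * r) + d)%N)
  (v := (#|vset V| ^ (2 * k))%N) (x := (2 * d + 4 * k * r)%:R - s%:R / 4)
  (prime_gt0 p_pr) _ _) _.
- by rewrite expnD mulnAC.
- apply: Num.Theory.lerB; first by rewrite ler_nat; lia.
  by rewrite ler_pdivrMr // ler_peMr ?ler0n // (ler_nat R 1 4).
- by rewrite -mulrA ler_peMl ?mulr_ge0 ?powR_ge0 ?ler0n // (ler_nat R 1 81).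
Qed.
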